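(* Let $A \in \mathbb{R}^{2\times 2}$ be nonnegative and irreducible. Then $r(t) := r\big((1-t)A + tA^{\top}\big)$, the spectral radius (Perron–Frobenius eigenvalue) of $(1-t)A+tA^\top$, is concave over $t\in(0,1)$, and strictly concave when $A$ has different (i.e. non-collinear) left and right Perron–Frobenius eigenvectors.
   Context: $r(M)$ denotes the spectral radius of a square matrix $M$. *)

From HB Require Import structures.
From mathcomp Require Import all_boot all_order all_algebra.
From mathcomp Require Import complex.
Set Implicit Arguments. Unset Strict Implicit. Unset Printing Implicit Defensive.
Import Order.TTheory GRing.Theory Num.Theory.
Local Open Scope ring_scope.

Section Spectral.
Variable R : rcfType.

Definition complexify n (M : 'M[R]_n) : 'M[R[i]]_n :=
  map_mx (fun x : R => (x%:C)%C) M.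

(* the spectrum: the list of complex eigenvalues (with multiplicity), i.e. the
   roots of the characteristic polynomial, which splits over R[i] *)
Definition spectrum n (M : 'M[R]_n) : seq R[i] :=
  sval (closed_field_poly_normal (char_poly (complexify M))).

Definition spectral_radius n (M : 'M[R]_n) : R :=
  \big[Num.max/0]_(z <- spectrum M) ComplexField.Normc.normc z.

Definition nonneg_mx m n (A : 'M[R]_(m, n)) := forall i j, 0 <= A i j.
Definition pos_mx m n (A : 'M[R]_(m, n)) := forall i j, 0 < A i j.

(* irreducibility of a nonnegative matrix: its directed graph is strongly
   connected, i.e. for all i j some power A^k has a positive (i,j) entry *)
Definition irreducible_mx n (A : 'M[R]_n) :=
  forall i j, exists k : nat, 0 < (A ^+ k) i j.

Definition right_PF_vector n (A : 'M[R]_n) (u : 'cV[R]_n) :=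
  pos_mx u /\ A *m u = spectral_radius A *: u.
Definition left_PF_vector n (A : 'M[R]_n) (w : 'cV[R]_n) :=
  pos_mx w /\ w^T *m A = spectral_radius A *: w^T.

Definition collinear n (u w : 'cV[R]_n) := exists c : R, w = c *: u.

Definition r_path n (A : 'M[R]_n) (t : R) : R :=
  spectral_radius ((1 - t) *: A + t *: A^T).

Definition concave_on01 (f : R -> R) :=
  forall s t a, 0 < s < 1 -> 0 < t < 1 -> 0 <= a <= 1 ->
    a * f s + (1 - a) * f t <= f (a * s + (1 - a) * t).
Definition strictly_concave_on01 (f : R -> R) :=
  forall s t a, 0 < s < 1 -> 0 < t < 1 -> s != t -> 0 < a < 1 ->
    a * f s + (1 - a) * f t < f (a * s + (1 - a) * t).
End Spectral.

From HB Require Import structures.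
From mathcomp Require Import all_boot all_order all_algebra.
From mathcomp Require Import complex.
From mathcomp Require Import ring lra.
Set Implicit Arguments. Unset Strict Implicit. Unset Printing Implicit Defensive.
Import Order.TTheory GRing.Theory Num.Theory.
Local Open Scope ring_scope.

(* A 2x2 matrix with real eigenvalues and nonnegative trace has spectral
   radius (tr + sqrt disc) / 2, where disc = tr^2 - 4 det.  Along the path
   (1-t)A + tA^T the trace is constant and the discriminant is
   disc A + 4 (a01 - a10)^2 t(1-t), a concave parabola; the square root of a
   nonnegative concave function is concave, strictly so when the parabola is,
   i.e. when a01 <> a10.  If a01 = a10 then A is symmetric, so left and right
   Perron-Frobenius vectors are eigenvectors of A for the same eigenvalue, and
   since a01 <> 0 by irreducibility that eigenspace is a line. *)

Lemma ord2_cases (i : 'I_2) : i = 0 \/ i = 1.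
Proof. by case: i => [[|[|//]] ?]; [left | right]; apply: val_inj. Qed.

Lemma sum_ord2 (V : nmodType) (F : 'I_2 -> V) : \sum_i F i = F 0 + F 1.
Proof.
by rewrite !big_ord_recl big_ord0 addr0; congr (_ + F _); apply: val_inj.
Qed.

Lemma mxtrace_mx2 (R : pzRingType) (M : 'M[R]_2) : \tr M = M 0 0 + M 1 1.
Proof. exact: sum_ord2. Qed.

Lemma det_mx2 (R : comPzRingType) (M : 'M[R]_2) :
  \det M = M 0 0 * M 1 1 - M 0 1 * M 1 0.
Proof.
rewrite (expand_det_row _ 0) sum_ord2 /cofactor !det_mx11 !mxE /=.
rewrite expr0 expr1 !mul1r mulN1r mulrN.
by congr (_ * M _ _ - _ * M _ _); apply: val_inj.
Qed.

Lemma char_poly_mx2 (R : comNzRingType) (M : 'M[R]_2) :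
  char_poly M = 'X^2 - (\tr M)%:P * 'X + (\det M)%:P.
Proof.
apply/polyP => -[|[|[|i]]];
  rewrite !(coefD, coefN, coefCM, coefX, coefXn, coefC) /=
          ?(mulr0, mulr1, oppr0, addr0, add0r).
- by rewrite char_poly_det expr2 mulrNN !mul1r.
- by move: (char_poly_trace M isT) => /= ->.
- by have /monicP := char_poly_monic M; rewrite /lead_coef size_char_poly.
- by rewrite nth_default ?size_char_poly.
Qed.

Definition char_discr (R : pzRingType) (M : 'M[R]_2) := \tr M ^+ 2 - 4 * \det M.

Lemma char_discr_mx2 (R : comPzRingType) (M : 'M[R]_2) :
  char_discr M = (M 0 0 - M 1 1) ^+ 2 + 4 * (M 0 1 * M 1 0).
Proof. by rewrite /char_discr mxtrace_mx2 det_mx2; ring. Qed.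

Lemma char_discr_ge0 (R : realDomainType) (M : 'M[R]_2) :
  0 <= M 0 1 * M 1 0 -> 0 <= char_discr M.
Proof. by move=> ?; rewrite char_discr_mx2 addr_ge0 ?sqr_ge0 // mulr_ge0. Qed.

Section Spectrum.
Local Open Scope complex_scope.

Lemma spectrum_mx2 (R : rcfType) (M : 'M[R]_2) (z1 z2 : R[i]) :
  z1 + z2 = (\tr M)%:C -> z1 * z2 = (\det M)%:C ->
  perm_eq (spectrum M) [:: z1; z2].
Proof.
rewrite /spectrum; case: closed_field_poly_normal => s /=.
rewrite (monicP (char_poly_monic _)) scale1r => Ds Dtr Ddet.
apply: prod_XsubC_eq; rewrite -Ds char_poly_mx2 !big_cons big_nil mulr1.
have -> : \tr (complexify M) = z1 + z2 by rewrite Dtr !mxtrace_mx2 !mxE rmorphD.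
have -> : \det (complexify M) = z1 * z2.
  by rewrite Ddet !det_mx2 !mxE rmorphB !rmorphM.
by rewrite polyCD polyCM; ring.
Qed.

Lemma normc_real (R : rcfType) (x : R) : ComplexField.Normc.normc x%:C = `|x|.
Proof. by rewrite /= expr0n /= addr0 sqrtr_sqr. Qed.

Lemma spectral_radius_mx2 (R : rcfType) (M : 'M[R]_2) :
  0 <= \tr M -> 0 <= char_discr M ->
  spectral_radius M = (\tr M + Num.sqrt (char_discr M)) / 2.
Proof.
move=> tr_ge0 discr_ge0; set S := Num.sqrt _.
have S_ge0 : 0 <= S := sqrtr_ge0 _.
pose l1 := (\tr M + S) / 2; pose l2 := (\tr M - S) / 2.
have sum_l : l1 + l2 = \tr M by rewrite /l1 /l2; field.
have prod_l : l1 * l2 = \det M.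
  have -> : l1 * l2 = (\tr M ^+ 2 - S ^+ 2) / 4 by rewrite /l1 /l2; field.
  by rewrite sqr_sqrtr // /char_discr; field.
have spec : perm_eq (spectrum M) [:: l1%:C; l2%:C].
  by apply: spectrum_mx2; rewrite -(rmorphD, rmorphM) (sum_l, prod_l).
rewrite /spectral_radius (perm_big _ spec) !big_cons big_nil !normc_real.
have l1_ge0 : 0 <= l1 by rewrite /l1; lra.
have l2_le : `|l2| <= l1 by rewrite ler_norml /l1 /l2; apply/andP; split; lra.
change (Num.max `|l1| (Num.max `|l2| 0) = l1).
by rewrite (max_idPl (normr_ge0 _)) (ger0_norm l1_ge0); apply/max_idPl.
Qed.

End Spectrum.

Lemma r_path_mx2 (R : rcfType) (A : 'M[R]_2) (t : R) : nonneg_mx A -> 0 <= t <= 1 ->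
  r_path A t =
  (\tr A + Num.sqrt (char_discr A + 4 * (A 0 1 - A 1 0) ^+ 2 * (t * (1 - t)))) / 2.
Proof.
move=> A_ge0 /andP[t_ge0 t_le1].
pose P : 'M[R]_2 := (1 - t) *: A + t *: A^T.
have tr_P : \tr P = \tr A by rewrite mxtraceD !mxtraceZ mxtrace_tr; ring.
have discr_P : char_discr P = char_discr A + 4 * (A 0 1 - A 1 0) ^+ 2 * (t * (1 - t)).
  by rewrite !char_discr_mx2 !mxE; ring.
have tr_ge0 : 0 <= \tr P by rewrite tr_P mxtrace_mx2 addr_ge0.
have discr_ge0 : 0 <= char_discr P.
  have t'_ge0 : 0 <= 1 - t by rewrite subr_ge0.
  by rewrite char_discr_ge0 // !mxE mulr_ge0 // addr_ge0 // mulr_ge0.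
by rewrite -[r_path A t]/(spectral_radius P) spectral_radius_mx2 // tr_P discr_P.
Qed.

Lemma convex_comb_itv01 (R : realFieldType) (s t a : R) :
  0 <= s <= 1 -> 0 <= t <= 1 -> 0 <= a <= 1 -> 0 <= a * s + (1 - a) * t <= 1.
Proof. move=> /andP[? ?] /andP[? ?] /andP[? ?]; apply/andP; split; nra. Qed.

Lemma sqrtr_concave (R : rcfType) (x y a : R) :
  0 <= x -> 0 <= y -> 0 <= a <= 1 ->
  a * Num.sqrt x + (1 - a) * Num.sqrt y <= Num.sqrt (a * x + (1 - a) * y).
Proof.
move=> x_ge0 y_ge0 /andP[a_ge0 a_le1].
have a'_ge0 : 0 <= 1 - a by rewrite subr_ge0.
rewrite -[x in leRHS](sqr_sqrtr x_ge0) -[y in leRHS](sqr_sqrtr y_ge0).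
have X_ge0 := sqrtr_ge0 x; have Y_ge0 := sqrtr_ge0 y.
set X := Num.sqrt x; set Y := Num.sqrt y.
have W_ge0 : 0 <= a * X + (1 - a) * Y by rewrite addr_ge0 ?mulr_ge0.
rewrite -[leLHS]ger0_norm // -sqrtr_sqr ler_sqrt; last first.
  by rewrite addr_ge0 ?mulr_ge0 ?sqr_ge0.
have := mulr_ge0 (mulr_ge0 a_ge0 a'_ge0) (sqr_ge0 (X - Y)); lra.
Qed.

Section SqrtParabola.
Variables (R : rcfType) (m k : R).
Hypotheses (m_ge0 : 0 <= m) (k_ge0 : 0 <= k).

Let f (t : R) := m + k * (t * (1 - t)).

Let f_ge0 t : 0 <= t <= 1 -> 0 <= f t.
Proof. by case/andP=> t_ge0 t_le1; rewrite addr_ge0 ?mulr_ge0 ?subr_ge0. Qed.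

Let f_convex_comb s t a :
  f (a * s + (1 - a) * t) = a * f s + (1 - a) * f t + k * (a * (1 - a) * (s - t) ^+ 2).
Proof. by rewrite /f; ring. Qed.

Lemma sqrt_parabola_concave s t a :
  0 <= s <= 1 -> 0 <= t <= 1 -> 0 <= a <= 1 ->
  a * Num.sqrt (f s) + (1 - a) * Num.sqrt (f t) <= Num.sqrt (f (a * s + (1 - a) * t)).
Proof.
move=> s01 t01 a01; apply: le_trans (sqrtr_concave (f_ge0 s01) (f_ge0 t01) a01) _.
have [a_ge0 a_le1] := andP a01; have a'_ge0 : 0 <= 1 - a by rewrite subr_ge0.
have gap_ge0 := mulr_ge0 k_ge0 (mulr_ge0 (mulr_ge0 a_ge0 a'_ge0) (sqr_ge0 (s - t))).
by rewrite f_convex_comb ler_sqrt ?lerDl // -f_convex_comb f_ge0 ?convex_comb_itv01.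
Qed.

Lemma sqrt_parabola_strictly_concave s t a :
  0 < k -> s != t -> 0 <= s <= 1 -> 0 <= t <= 1 -> 0 < a < 1 ->
  a * Num.sqrt (f s) + (1 - a) * Num.sqrt (f t) < Num.sqrt (f (a * s + (1 - a) * t)).
Proof.
move=> k_gt0 s_neq_t s01 t01 /andP[a_gt0 a_lt1].
have a01 : 0 <= a <= 1 by rewrite !ltW.
apply: le_lt_trans (sqrtr_concave (f_ge0 s01) (f_ge0 t01) a01) _.
have a'_gt0 : 0 < 1 - a by rewrite subr_gt0.
have st_gt0 : 0 < (s - t) ^+ 2 by rewrite exprn_even_gt0 //= subr_eq0.
have gap_gt0 := mulr_gt0 k_gt0 (mulr_gt0 (mulr_gt0 a_gt0 a'_gt0) st_gt0).
have comb_ge0 := addr_ge0 (mulr_ge0 (ltW a_gt0) (f_ge0 s01))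
                          (mulr_ge0 (ltW a'_gt0) (f_ge0 t01)).
by rewrite f_convex_comb ltr_sqrt ?ltrDl // ltr_wpDl.
Qed.
End SqrtParabola.

Lemma eigenvectors_mx2_collinear (R : rcfType) (M : 'M[R]_2) (r : R) (u w : 'cV_2) :
  M 0 1 != 0 -> u 0 0 != 0 -> M *m u = r *: u -> M *m w = r *: w -> collinear u w.
Proof.
move=> b_neq0 u0_neq0 Mu Mw.
have row0 (v : 'cV_2) : M *m v = r *: v -> M 0 1 * v 1 0 = (r - M 0 0) * v 0 0.
  by move=> /matrixP /(_ 0 0); rewrite !mxE sum_ord2; lra.
exists (w 0 0 / u 0 0); apply/matrixP => i j; rewrite (ord1 j) !mxE.
case: (ord2_cases i) => ->; first by rewrite divfK.
apply: (mulfI b_neq0); rewrite mulrCA (row0 _ Mw) (row0 _ Mu).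
by field.
Qed.

Lemma PF_vectors_collinear_sym (R : rcfType) (A : 'M[R]_2) (u w : 'cV_2) :
  A 0 1 = A 1 0 -> A 0 1 != 0 ->
  right_PF_vector A u -> left_PF_vector A w -> collinear u w.
Proof.
move=> A_sym b_neq0 [u_gt0 Au] [_ wA].
have At : A^T = A.
  apply/matrixP => i j; rewrite mxE.
  by case: (ord2_cases i) (ord2_cases j) => -> [] ->.
apply: (eigenvectors_mx2_collinear b_neq0 (lt0r_neq0 (u_gt0 0 0)) Au).
by rewrite -[A in A *m _]At -[w]trmxK -trmx_mul wA linearZ.
Qed.

Lemma irreducible_mx2_offdiag (R : rcfType) (A : 'M[R]_2) :
  irreducible_mx A -> A 0 1 != 0.
Proof.
move=> A_irr; apply/eqP => b0; have [k] := A_irr 0 1.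
suff -> : (A ^+ k) 0 1 = 0 by rewrite ltxx.
elim: k => [|k IHk]; first by rewrite expr0 mxE.
by rewrite exprSr -mulmxE mxE sum_ord2 IHk b0 !mulr0 mul0r addr0.
Qed.

Theorem theorem1 (R : rcfType) (A : 'M[R]_2) :
  nonneg_mx A -> irreducible_mx A ->
  concave_on01 (r_path A) /\
  ((exists u w : 'cV[R]_2,
      right_PF_vector A u /\ left_PF_vector A w /\ ~ collinear u w) ->
   strictly_concave_on01 (r_path A)).
Proof.
move=> A_ge0 A_irr.
have r_pathE t := @r_path_mx2 R A t A_ge0.
have itv01W (x : R) : 0 < x < 1 -> 0 <= x <= 1 by case/andP=> *; rewrite !ltW.
have discr_ge0 := char_discr_ge0 (mulr_ge0 (A_ge0 0 1) (A_ge0 1 0)).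
have k_ge0 := mulr_ge0 (ler0n R 4) (sqr_ge0 (A 0 1 - A 1 0)).
split.
  move=> s t a /itv01W s01 /itv01W t01 a01.
  rewrite !r_pathE ?convex_comb_itv01 //.
  have := sqrt_parabola_concave discr_ge0 k_ge0 s01 t01 a01; lra.
move=> [u [w [u_PF [w_PF not_uw]]]] s t a /itv01W s01 /itv01W t01 s_neq_t a01.
have b_neq_c : A 0 1 != A 1 0.
  apply/eqP => b_eq_c; apply: not_uw.
  exact: PF_vectors_collinear_sym b_eq_c (irreducible_mx2_offdiag A_irr) u_PF w_PF.
have k_gt0 : 0 < 4 * (A 0 1 - A 1 0) ^+ 2.
  by rewrite mulr_gt0 // exprn_even_gt0 //= subr_eq0.
rewrite !r_pathE ?convex_comb_itv01 ?(itv01W _ a01) //.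
have := sqrt_parabola_strictly_concave discr_ge0 k_ge0 k_gt0 s_neq_t s01 t01 a01.
lra.
Qed.
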